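(* For every positive integer $t$ there exist constants $\alpha,\beta,\gamma>0$ such that the following holds. Let $s$ be a positive integer and $n\geq 2$ an integer, and let $G$ be a semilinear graph of complexity $t$ on $n$ vertices that contains no clique of size $s$. Then $$\chi(G)\leq \alpha s^{\beta}(\log n)^{\gamma}.$$
   Context: A function $f:\mathbb{R}^{m}\to\mathbb{R}$ is linear if $f(\mathbf{x})=b+\sum_{i=1}^m a_i\mathbf{x}(i)$ for some reals $a_1,\dots,a_m,b$. A (finite, simple) graph $G$ is semilinear of complexity $t$ if $V(G)\subset\mathbb{R}^d$ for some positive integer $d$, and there are $t$ linear functions $f_1,\dots,f_t:\mathbb{R}^d\times\mathbb{R}^d\to\mathbb{R}$ and a Boolean function $\phi:\{\mathrm{F},\mathrm{T}\}^{3t}\to\{\mathrm{F},\mathrm{T}\}$ such that for distinct $\mathbf{x},\mathbf{y}\in V(G)$, $\{\mathbf{x},\mathbf{y}\}$ is an edge iff $\phi\big(\{f_i(\mathbf{x},\mathbf{y})<0,\ f_i(\mathbf{x},\mathbf{y})\leq 0,\ f_i(\mathbf{x},\mathbf{y})=0\}_{i\in[t]}\big)=\mathrm{T}$; it is assumed that this truth value is unchanged when $\mathbf{x}$ and $\mathbf{y}$ are swapped. $\chi(G)$ is the chromatic number. *)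

From HB Require Import structures.
From mathcomp Require Import all_boot all_order all_algebra.
From mathcomp Require Import all_classical all_reals all_analysis.
Set Implicit Arguments. Unset Strict Implicit. Unset Printing Implicit Defensive.
Import Order.TTheory GRing.Theory Num.Theory.
Local Open Scope ring_scope.

Definition colorable (T : finType) (e : rel T) (k : nat) : bool :=
  [exists f : {ffun T -> 'I_k}, [forall x, forall y, e x y ==> (f x != f y)]].

Lemma colorable_card (T : finType) (e : rel T) :
  irreflexive e -> exists k, colorable e k.
Proof.
move=> irr; exists #|T|; apply/existsP; exists [ffun x => enum_rank x].
apply/forallP=> x; apply/forallP=> y; apply/implyP=> exy.
rewrite !ffunE; apply/negP=> /eqP /enum_rank_inj exy'.
by move: exy; rewrite exy' irr.
Qed.

Definition chromatic_number (T : finType) (e : rel T) (irr : irreflexive e) : nat :=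
  ex_minn (colorable_card irr).

Definition clique (T : finType) (e : rel T) (S : {set T}) : Prop :=
  forall x y, x \in S -> y \in S -> x != y -> e x y.

Definition linf (R : realType) (t d : nat)
  (ax ay : 'I_t -> 'rV[R]_d) (b : 'I_t -> R) (i : 'I_t) (x y : 'rV[R]_d) : R :=
  b i + \sum_(j < d) ax i ord0 j * x ord0 j + \sum_(j < d) ay i ord0 j * y ord0 j.

(* The Boolean function phi : {F,T}^{3t} -> {F,T} is represented with its 3t
   arguments grouped as three t-tuples: the truth values of
   f_i < 0, f_i <= 0, f_i = 0 for i in [t]. *)
Definition semilin_val (R : realType) (t d : nat)
  (ax ay : 'I_t -> 'rV[R]_d) (b : 'I_t -> R)
  (phi : {ffun 'I_t -> bool} -> {ffun 'I_t -> bool} -> {ffun 'I_t -> bool} -> bool)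
  (x y : 'rV[R]_d) : bool :=
  phi [ffun i => linf ax ay b i x y < 0]
      [ffun i => linf ax ay b i x y <= 0]
      [ffun i => linf ax ay b i x y == 0].

(* The semilinear graph on the vertex set {p i | i < n} (p injective):
   vertices i, j adjacent iff they are distinct and phi(...) is true. *)
Definition semilin_rel (R : realType) (t d n : nat)
  (ax ay : 'I_t -> 'rV[R]_d) (b : 'I_t -> R)
  (phi : {ffun 'I_t -> bool} -> {ffun 'I_t -> bool} -> {ffun 'I_t -> bool} -> bool)
  (p : 'I_n -> 'rV[R]_d) : rel 'I_n :=
  fun i j => (i != j) && semilin_val ax ay b phi (p i) (p j).

Lemma semilin_rel_irr (R : realType) (t d n : nat) ax ay b phi
  (p : 'I_n -> 'rV[R]_d) : irreflexive (@semilin_rel R t d n ax ay b phi p).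
Proof. by move=> i; rewrite /semilin_rel eqxx. Qed.

(* Each sign condition on f_i(x, y) compares a number attached to x with a
   number attached to y; replacing these 2n reals by their ranks gives
   every vertex, for each i, a pair of integers below 2n.  In the binary tree
   on the integers such a pair splits at one of O(log n) levels, on one of two
   sides.  Colour first by these (2 log2 n + 5)^t classes.  Inside a class, the
   adjacency of x and y only depends on how the splitting nodes of x and y
   compare, i.e. on one of 4^t patterns, and for each pattern the edges
   oriented along a fixed linear order form a strict partial order whose chains
   are cliques.  The heights in these orders (all below s) complete a proper
   colouring with (2 log2 n + 5)^t s^(4^t) colours. *)

From HB Require Import structures.
From mathcomp Require Import all_boot all_order all_algebra.
From mathcomp Require Import all_classical all_reals all_analysis.
From mathcomp Require Import zify lra.
Import Order.TTheory GRing.Theory Num.Theory.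

Set Implicit Arguments. Unset Strict Implicit. Unset Printing Implicit Defensive.

Section Height.
Variables (T : finType) (r : rel T).
Hypotheses (r_irr : irreflexive r) (r_trans : transitive r).

Definition chain (S : {set T}) : bool :=
  [forall x in S, forall y in S, (x != y) ==> r x y || r y x].

Definition chain_to (x : T) (S : {set T}) : bool :=
  [&& x \in S, chain S & [forall y in S, (y != x) ==> r y x]].

Definition height (x : T) : nat := \max_(S | chain_to x S) #|S|.

Lemma height_spec x : exists2 S, chain_to x S & height x = #|S|.
Proof.
have x_chain : chain_to x [set x].
  rewrite /chain_to inE eqxx /=; apply/andP; split.
    by apply/forall_inP=> y /set1P-> ; apply/forall_inP=> z /set1P->; rewrite eqxx.
  by apply/forall_inP=> y /set1P->; rewrite eqxx.
have [|S] := @eq_bigmax_cond _ (chain_to x) (fun S => #|S|).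
  by apply/card_gt0P; exists [set x].
by exists S.
Qed.

Lemma height_lt x y : r x y -> (height x < height y)%N.
Proof.
move=> rxy; have [S /and3P[xS chS /forall_inP below_x] ->] := height_spec x.
have below_y z : z \in S -> r z y.
  move=> zS; have [-> //|zx] := eqVneq z x.
  by apply: r_trans rxy; have := below_x z zS; rewrite zx.
have yS : y \notin S by apply/negP=> /below_y; rewrite r_irr.
have chain_y : chain_to y (y |: S).
  rewrite /chain_to setU11 /=; apply/andP; split.
    apply/forall_inP=> u /setU1P[->|uS]; apply/forall_inP=> v /setU1P[->|vS].
    - by rewrite eqxx.
    - by rewrite (below_y v vS) orbT implybT.
    - by rewrite (below_y u uS) implybT.
    by have /forall_inP/(_ v vS) := forall_inP chS u uS.
  by apply/forall_inP=> z /setU1P[->|/below_y->]; rewrite ?eqxx ?implybT.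
apply: leq_trans (leq_bigmax_cond _ chain_y).
by rewrite cardsU1 yS.
Qed.

End Height.

Lemma colorable_proper (T K : finType) (e : rel T) (col : T -> K) :
  (forall x y, e x y -> col x != col y) -> colorable e #|K|.
Proof.
move=> col_proper; apply/existsP; exists [ffun x => enum_rank (col x)].
apply/forallP=> x; apply/forallP=> y; apply/implyP=> exy.
by rewrite !ffunE (inj_eq enum_rank_inj) col_proper.
Qed.

Lemma chromatic_number_min (T : finType) (e : rel T) (e_irr : irreflexive e) k :
  colorable e k -> (chromatic_number e_irr <= k)%N.
Proof. by rewrite /chromatic_number; case: ex_minnP => m _; apply. Qed.

Lemma clique_card_lt (T : finType) (e : rel T) (s : nat) (S : {set T}) :
  (forall B : {set T}, #|B| = s -> ~ clique e B) -> clique e S -> (#|S| < s)%N.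
Proof.
move=> clique_free S_clique; rewrite ltnNge; apply/negP=> /card_geqP[q [q_uniq q_size qS]].
apply: (clique_free [set x in q]); first by rewrite cardsE (card_uniqP q_uniq).
by move=> x y; rewrite !inE => /qS xS /qS yS; apply: S_clique.
Qed.

Section PatternColouring.
Variables (T : finType) (e : rel T) (s : nat).
Hypotheses (e_irr : irreflexive e) (e_sym : symmetric e).
Hypothesis e_clique_free : forall S : {set T}, #|S| = s -> ~ clique e S.
Variables (C P : finType) (code : T -> C) (pattern : T -> T -> P).
Hypothesis pattern_trans :
  forall x y z, pattern x y = pattern y z -> pattern x z = pattern x y.
Hypothesis e_pattern : forall x y x' y', x != y -> x' != y' ->
  code x = code y -> code x' = code x -> code y' = code x ->
  pattern x y = pattern x' y' -> e x y = e x' y'.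

Definition pattern_order (sg : P) : rel T := fun x y =>
  [&& code x == code y, pattern x y == sg, e x y & (enum_rank x < enum_rank y)%N].

Lemma pattern_order_irr sg : irreflexive (pattern_order sg).
Proof. by move=> x; rewrite /pattern_order ltnn !andbF. Qed.

Lemma pattern_order_trans sg : transitive (pattern_order sg).
Proof.
move=> y x z /and4P[/eqP cxy /eqP pxy exy lxy] /and4P[/eqP cyz /eqP pyz _ lyz].
have lxz := ltn_trans lxy lyz.
have neq (u v : T) : (enum_rank u < enum_rank v)%N -> u != v.
  by apply: contraTneq => ->; rewrite ltnn.
have pxz : pattern x z = pattern x y by apply: pattern_trans; rewrite pxy pyz.
rewrite /pattern_order cxy cyz eqxx pxz pxy eqxx lxz andbT /=.
by rewrite -(e_pattern (neq _ _ lxy) (neq _ _ lxz)) // ?cxy ?cyz.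
Qed.

Lemma pattern_chain_clique sg S : chain (pattern_order sg) S -> clique e S.
Proof.
move=> /forall_inP S_chain x y xS yS xy.
have /forall_inP/(_ y yS) := S_chain x xS; rewrite xy /=.
by case/orP=> /and4P[_ _ + _] //; rewrite e_sym.
Qed.

Lemma height_pattern_lt sg x : (height (pattern_order sg) x < s)%N.
Proof.
have [S /and3P[_ S_chain _] ->] := height_spec (pattern_order sg) x.
exact/clique_card_lt/(pattern_chain_clique S_chain).
Qed.

Definition pattern_colour x : C * {ffun P -> 'I_s} :=
  (code x, [ffun sg => Ordinal (height_pattern_lt sg x)]).

Lemma pattern_colour_proper x y : e x y -> pattern_colour x != pattern_colour y.
Proof.
wlog lxy : x y / (enum_rank x < enum_rank y)%N.
  move=> wlog_lt exy.
  have [lxy|lyx|/val_inj/enum_rank_inj xy] := ltngtP (enum_rank x) (enum_rank y).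
  - exact: wlog_lt.
  - by rewrite eq_sym wlog_lt // e_sym.
  - by move: exy; rewrite xy e_irr.
move=> exy; apply/negP=> /eqP[cxy /ffunP/(_ (pattern x y))].
rewrite !ffunE => -[] /eqP; apply/negP; rewrite neq_ltn height_lt //.
- exact: pattern_order_irr.
- exact: pattern_order_trans.
by rewrite /pattern_order cxy !eqxx exy lxy.
Qed.

Lemma pattern_colorable : colorable e (#|C| * s ^ #|P|).
Proof.
rewrite -[s in s ^ _]card_ord -card_ffun -card_prod.
exact: colorable_proper pattern_colour_proper.
Qed.

End PatternColouring.

Section Rank.
Variables (disp : Order.disp_t) (X : orderType disp) (A : finType) (g : A -> X).

Definition rank (v : X) : nat := #|[set a | (g a < v)%O]|.

Lemma rank_lt_card a : (rank (g a) < #|A|)%N.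
Proof.
rewrite /rank -cardsT; apply/proper_card/properP; split; first by apply/fintype.subsetP.
by exists a; rewrite !inE ?ltxx.
Qed.

Lemma ltn_rank a c : (rank (g a) < rank (g c))%N = (g a < g c)%O.
Proof.
apply/idP/idP=> [|lac]; last first.
  apply/proper_card/properP; split; last by exists a; rewrite !inE ?ltxx.
  by apply/fintype.subsetP=> z; rewrite !inE => /lt_trans; apply.
apply: contraTT; rewrite -leNgt -leqNgt => lca.
by apply/subset_leq_card/fintype.subsetP=> z; rewrite !inE => /lt_le_trans; apply.
Qed.

Lemma leq_rank a c : (rank (g a) <= rank (g c))%N = (g a <= g c)%O.
Proof. by rewrite leqNgt ltn_rank leNgt. Qed.

Lemma eqn_rank a c : (rank (g a) == rank (g c)) = (g a == g c).
Proof. by rewrite eqn_leq !leq_rank eq_le. Qed.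

End Rank.

Section DyadicSplit.
Local Open Scope nat_scope.

Lemma exists_common_ancestor u w : exists j, u %/ 2 ^ j.+1 == w %/ 2 ^ j.+1.
Proof.
exists (u + w); have := ltn_expl (u + w).+1 (isT : 1 < 2).
by move=> big; rewrite !divn_small //; lia.
Qed.

(* Naturals are the nodes of the binary tree in which [m %/ 2] is the parent of
   [m].  Distinct [u] and [w] have distinct sibling ancestors at [split_level],
   and [odd] says on which side [u] lies; [dyadic_root] is their lowest common
   ancestor. *)
Definition split_level u w : nat := ex_minn (exists_common_ancestor u w).

Definition dyadic_class u w : option (nat * bool) :=
  if u == w then None else Some (split_level u w, odd (u %/ 2 ^ split_level u w)).

Definition dyadic_root u w : nat :=
  if u == w then u else u %/ 2 ^ (split_level u w).+1.

Lemma split_level_sibling u w (j := split_level u w) : u != w ->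
  u %/ 2 ^ j != w %/ 2 ^ j /\ u %/ 2 ^ j %/ 2 = w %/ 2 ^ j %/ 2.
Proof.
rewrite /j /split_level => uw; case: ex_minnP => m /eqP top min.
rewrite !expnSr !divnMA in top; split=> //.
case: m {top} min => [|m] min; first by rewrite expn0 !divn1.
by apply/negP=> /min; rewrite ltnn.
Qed.

Lemma split_level_le u w K : u < 2 ^ K.+1 -> w < 2 ^ K.+1 -> split_level u w <= K.
Proof.
by move=> uK wK; rewrite /split_level; case: ex_minnP => m _; apply; rewrite !divn_small.
Qed.

Lemma ltn_div_neq d x y : x %/ d != y %/ d -> (x < y) = (x %/ d < y %/ d).
Proof.
move=> xy; apply/idP/idP=> [lxy|]; last by apply: contraTT; rewrite -!leqNgt; apply: leq_div2r.
by rewrite ltn_neqAle xy leq_div2r // ltnW.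
Qed.

Lemma dyadic_cmp u1 w1 u2 w2 : dyadic_class u1 w1 = dyadic_class u2 w2 ->
  let r1 := dyadic_root u1 w1 in let r2 := dyadic_root u2 w2 in
  (u1 < w2) = (if dyadic_class u1 w1 is Some (_, false) then r1 <= r2 else r1 < r2)
  /\ (u1 == w2) = (dyadic_class u1 w1 == None) && (r1 == r2).
Proof.
rewrite /dyadic_class /dyadic_root.
have [->|uw1] := eqVneq u1 w1; have [<-|uw2] := eqVneq u2 w2 => //= -[j_eq c_eq].
have [sib2 parent2] := split_level_sibling uw2.
rewrite -j_eq in c_eq parent2 sib2 *; rewrite !expnSr !divnMA.
move: (split_level u1 w1) => j in c_eq parent2 sib2 *.
have sib1 : u1 %/ 2 ^ j != w2 %/ 2 ^ j by apply/eqP; lia.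
have -> : (u1 == w2) = false by apply: contraNF sib1 => /eqP->.
rewrite (ltn_div_neq sib1).
by case: (odd (u1 %/ 2 ^ j)) c_eq; split=> //; lia.
Qed.

End DyadicSplit.

Section SemilinearColouring.
Local Open Scope ring_scope.
Variables (R : realType) (t d n : nat) (ax ay : 'I_t -> 'rV[R]_d) (b : 'I_t -> R).
Variable phi : {ffun 'I_t -> bool} -> {ffun 'I_t -> bool} -> {ffun 'I_t -> bool} -> bool.
Variable p : 'I_n -> 'rV[R]_d.

(* [linf ax ay b i x y = endpoint i (inl x) - endpoint i (inr y)]. *)
Definition endpoint (i : 'I_t) (z : 'I_n + 'I_n) : R :=
  match z with
  | inl a => b i + \sum_(j < d) ax i ord0 j * p a ord0 j
  | inr a => - \sum_(j < d) ay i ord0 j * p a ord0 j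
  end.

Definition urank i a := rank (endpoint i) (endpoint i (inl a)).
Definition wrank i a := rank (endpoint i) (endpoint i (inr a)).

Lemma semilin_val_rank a c : semilin_val ax ay b phi (p a) (p c) =
  phi [ffun i => (urank i a < wrank i c)%N] [ffun i => (urank i a <= wrank i c)%N]
      [ffun i => urank i a == wrank i c].
Proof.
have linfE i : linf ax ay b i (p a) (p c) = endpoint i (inl a) - endpoint i (inr c).
  by rewrite /linf /endpoint opprK.
by congr phi; apply/ffunP=> i; rewrite !ffunE linfE;
  rewrite ?subr_lt0 ?subr_le0 ?subr_eq0 (ltn_rank, leq_rank, eqn_rank).
Qed.

Let K := (trunc_log 2 n).+1.

Lemma rank_lt_exp i z : (rank (endpoint i) (endpoint i z) < 2 ^ K.+1)%N.
Proof.
have := rank_lt_card (endpoint i) z; have := trunc_log_ltn n (isT : (1 < 2)%N).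
by rewrite card_sum card_ord /K !expnS; lia.
Qed.

Definition vclass i a := dyadic_class (urank i a) (wrank i a).
Definition vroot i a := dyadic_root (urank i a) (wrank i a).

Lemma vclass_level_lt i a j c : vclass i a = Some (j, c) -> (j < K.+1)%N.
Proof.
rewrite /vclass /dyadic_class; case: eqP => // _ [<- _].
by rewrite ltnS split_level_le ?rank_lt_exp.
Qed.

Definition code a : {ffun 'I_t -> option ('I_K.+1 * bool)} :=
  [ffun i => omap (fun jc : nat * bool => (inord jc.1, jc.2)) (vclass i a)].

Lemma code_vclass a c i : code a = code c -> vclass i a = vclass i c.
Proof.
move/ffunP/(_ i); rewrite !ffunE.
case ca: vclass => [[j1 c1]|]; case cc: vclass => [[j2 c2]|] //= [].
move/(congr1 val); rewrite /= !inordK ?(vclass_level_lt ca) ?(vclass_level_lt cc) //.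
by move=> -> ->.
Qed.

Definition pattern a c : {ffun 'I_t -> bool} * {ffun 'I_t -> bool} :=
  ([ffun i => (vroot i a < vroot i c)%N], [ffun i => vroot i a == vroot i c]).

Lemma pattern_trans x y z : pattern x y = pattern y z -> pattern x z = pattern x y.
Proof.
case=> /ffunP lt_eq /ffunP eq_eq; congr pair; apply/ffunP=> i;
  move: (lt_eq i) (eq_eq i); rewrite !ffunE;
  case: (ltngtP (vroot i x) (vroot i y)); case: (ltngtP (vroot i y) (vroot i z)) => //;
  lia.
Qed.

Lemma semilin_val_pattern x y x' y' :
  code x = code y -> code x' = code x -> code y' = code x ->
  pattern x y = pattern x' y' ->
  semilin_val ax ay b phi (p x) (p y) = semilin_val ax ay b phi (p x') (p y').
Proof.
move=> cxy cx'x cy'x [/ffunP lt_eq /ffunP eq_eq].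
suff cmp_eq i : ((urank i x < wrank i y)%N = (urank i x' < wrank i y')%N)
              /\ (urank i x == wrank i y) = (urank i x' == wrank i y').
  rewrite !semilin_val_rank; congr phi; apply/ffunP=> i; have [lt_i eq_i] := cmp_eq i;
    rewrite !ffunE // (leq_eqVlt (urank i x)) (leq_eqVlt (urank i x')).
  by rewrite lt_i eq_i.
have [lt1 eq1] := dyadic_cmp (code_vclass i cxy).
have [lt2 eq2] := dyadic_cmp (code_vclass i (etrans cx'x (esym cy'x))).
move: (lt_eq i) (eq_eq i) (code_vclass i cx'x).
rewrite !ffunE /vroot /vclass => rlt req cls.
rewrite lt1 eq1 lt2 eq2 cls req; case: dyadic_class => [[_ []]|] //=.
by rewrite !(leq_eqVlt (dyadic_root _ _)) rlt req.
Qed.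

Lemma semilin_chromatic_le (s : nat) :
  (forall i j : 'I_n, i != j ->
     semilin_val ax ay b phi (p i) (p j) = semilin_val ax ay b phi (p j) (p i)) ->
  (forall S : {set 'I_n}, #|S| = s -> ~ clique (semilin_rel ax ay b phi p) S) ->
  (chromatic_number (semilin_rel_irr ax ay b phi p)
     <= (2 * trunc_log 2 n + 5) ^ t * s ^ 4 ^ t)%N.
Proof.
move=> val_sym clique_free.
have e_sym : symmetric (semilin_rel ax ay b phi p).
  move=> x y; rewrite /semilin_rel eq_sym; have [//|yx] := eqVneq y x.
  by rewrite val_sym // eq_sym.
have e_pattern x y x' y' : x != y -> x' != y' -> code x = code y -> code x' = code x ->
    code y' = code x -> pattern x y = pattern x' y' ->
    semilin_rel ax ay b phi p x y = semilin_rel ax ay b phi p x' y'.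
  move=> xy x'y' *; rewrite /semilin_rel xy x'y' /=.
  exact: semilin_val_pattern.
have := pattern_colorable (semilin_rel_irr ax ay b phi p) e_sym clique_free
  pattern_trans e_pattern.
move/chromatic_number_min/leq_trans; apply.
rewrite card_prod !card_ffun card_option card_prod !card_ord card_bool -expnMn.
by rewrite /K (_ : ((trunc_log 2 n).+2 * 2).+1 = 2 * trunc_log 2 n + 5)%N //; lia.
Qed.

End SemilinearColouring.

Section LogBound.
Local Open Scope ring_scope.
Variable R : realType.

Lemma trunc_log2_ln n : (0 < n)%N -> (trunc_log 2 n)%:R * ln (2 : R) <= ln n%:R.
Proof.
move=> n_gt0; rewrite mulrC mulr_natr -lnXn //.
rewrite ler_ln ?posrE ?exprn_gt0 ?ltr0n // -natrX ler_nat.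
exact: trunc_logP.
Qed.

Lemma colour_count_le_ln t s n : (2 <= n)%N ->
  ((2 * trunc_log 2 n + 5) ^ t * s ^ 4 ^ t)%:R
    <= (7 / ln 2) ^+ t * powR s%:R (4 ^ t)%:R * powR (ln n%:R : R) t%:R.
Proof.
move=> n_ge2; have ln2_gt0 : 0 < ln (2 : R) by rewrite ln_gt0 // ltr1n.
have ln_ge0 : 0 <= ln (n%:R : R) by apply: ln_ge0; rewrite ler1n; lia.
have log_bound : (2 * trunc_log 2 n + 5)%:R <= 7 / ln 2 * ln (n%:R : R).
  have log_ge1 : 1 <= (trunc_log 2 n)%:R :> R by rewrite ler1n; apply: trunc_log_max.
  have := @trunc_log2_ln n (ltnW n_ge2).
  by rewrite mulrAC ler_pdivlMr // natrD natrM; nra.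
rewrite powR_mulrn // powR_mulrn // natrM !natrX mulrAC -exprMn.
by rewrite ler_wpM2r ?exprn_ge0 // lerXn2r // nnegrE // (le_trans _ log_bound).
Qed.

End LogBound.

Local Open Scope ring_scope.

Theorem theorem1p4 (R : realType) (t : nat) : (0 < t)%N ->
  exists alpha beta gamma : R,
    [/\ 0 < alpha, 0 < beta, 0 < gamma &
    forall (s n d : nat) (ax ay : 'I_t -> 'rV[R]_d) (b : 'I_t -> R)
      (phi : {ffun 'I_t -> bool} -> {ffun 'I_t -> bool} -> {ffun 'I_t -> bool} -> bool)
      (p : 'I_n -> 'rV[R]_d),
      (0 < s)%N -> (2 <= n)%N -> (0 < d)%N ->
      injective p ->
      (* the truth value is unchanged when x and y are swapped *)
      (forall i j : 'I_n, i != j ->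
         semilin_val ax ay b phi (p i) (p j) = semilin_val ax ay b phi (p j) (p i)) ->
      (* G contains no clique of size s *)
      (forall S : {set 'I_n}, #|S| = s -> ~ clique (semilin_rel ax ay b phi p) S) ->
      ((chromatic_number (semilin_rel_irr ax ay b phi p))%:R : R)
        <= alpha * powR (s%:R) beta * powR (ln (n%:R)) gamma].
Proof.
move=> t_gt0; have ln2_gt0 : 0 < ln (2 : R) by rewrite ln_gt0 // ltr1n.
exists ((7 / ln 2) ^+ t), (4 ^ t)%:R, t%:R; split.
- by rewrite exprn_gt0 // divr_gt0.
- by rewrite ltr0n expn_gt0.
- by rewrite ltr0n.
move=> s n d ax ay b phi p _ n_ge2 _ _ val_sym clique_free.
apply: le_trans (colour_count_le_ln R t s n_ge2); rewrite ler_nat.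
exact: semilin_chromatic_le.
Qed.
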